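(* Let $\mathcal{M}=\langle S,\iota,\mathsf{Act},P,\mathsf{Z},\mathsf{obs}\rangle$ be an MDP. For every trace $\tau\in\mathsf{Z}^+$ and every state-risk function $r\colon S\to\mathbb{R}_{\ge0}$: $R_r(\tau)=\max_{\mathsf{bel}\in V(\mathsf{est}_{\mathsf{MDP}}(\tau))}\sum_{s\in S}\mathsf{bel}(s)\cdot r(s)$.
   Context: An MDP is a tuple $\langle S,\iota,\mathsf{Act},P,\mathsf{Z},\mathsf{obs}\rangle$: finite state set $S$, initial distribution $\iota\in\mathsf{Distr}(S)$, finite action set $\mathsf{Act}$, partial transition function $P\colon S\times\mathsf{Act}\rightharpoonup\mathsf{Distr}(S)$ (write $P(s,\alpha,s')=P(s,\alpha)(s')$), finite observation set $\mathsf{Z}$, observation function $\mathsf{obs}\colon S\to\mathsf{Distr}(\mathsf{Z})$; $\mathsf{AvAct}(s)=\{\alpha\mid P(s,\alpha)\text{ defined}\}\neq\emptyset$. A finite path is $\pi=s_0a_0\dots a_{n-1}s_n$ with $\iota(s_0)>0$, $P(s_i,a_i)(s_{i+1})>0$; $\mathrm{last}(\pi)=s_n$. A scheduler $\sigma$ maps each finite path $\pi$ to a distribution on $\mathsf{AvAct}(\mathrm{last}(\pi))$; $\Sigma$ is the set of schedulers; $\Pr^\sigma(\pi)=\iota(s_0)\prod_{i<n}\sigma(s_0a_0\dots s_i)(a_i)P(s_i,a_i)(s_{i+1})$. For a trace $\tau=z_0\dots z_n$ and path $\pi=s_0\dots s_m$, $\Pr(\tau\mid\pi)=\prod_{i=0}^n\mathsf{obs}(s_i)(z_i)$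 if $m=n$, else $0$; $\mathrm{Paths}(\tau)$ are the paths with as many states as $\tau$ has observations; $\Pr^\sigma(\tau)=\sum_\pi\Pr^\sigma(\pi)\Pr(\tau\mid\pi)$; $\Pr^\sigma(\pi\mid\tau)=\Pr(\tau\mid\pi)\Pr^\sigma(\pi)/\Pr^\sigma(\tau)$ with $0/0=0$. $R_r(\tau)=\sup_{\sigma\in\Sigma}\sum_{\pi\in\mathrm{Paths}(\tau)}\Pr^\sigma(\pi\mid\tau)r(\mathrm{last}(\pi))$. Beliefs: $\mathsf{Bel}=\mathsf{Distr}(S)\cup\{\mathbf{0}\}$, viewed as vectors in $\mathbb{R}^S$. $\mathsf{est}_{\mathsf{MDP}}(z)=\{b_z\}$ with $b_z(s)=\iota(s)\mathsf{obs}(s)(z)/\sum_{\hat s}\iota(\hat s)\mathsf{obs}(\hat s)(z)$ (or $\mathbf{0}$ if the denominator vanishes), and $\mathsf{est}_{\mathsf{MDP}}(\tau\cdot z)=\bigcup_{\mathsf{bel}\in\mathsf{est}_{\mathsf{MDP}}(\tau)}\mathsf{est}^{\mathsf{up}}(\mathsf{bel},z)$, where $\mathsf{bel}'\in\mathsf{est}^{\mathsf{up}}(\mathsf{bel},z)$ iff there is $\varsigma\colon S\to\mathsf{Distr}(\mathsf{Act})$ with $\varsigma(s)$ supported in $\mathsf{AvAct}(s)$ and $\mathsf{bel}'(s')=\dfrac{\sum_s\mathsf{bel}(s)\sum_\alpha\varsigma(s)(\alpha)P(s,\alpha,s')\mathsf{obs}(s')(z)}{\sum_s\mathsf{bel}(s)\sum_\alpha\varsigma(s)(\alpha)\sum_{\hat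 s}P(s,\alpha,\hat s)\mathsf{obs}(\hat s)(z)}$ for all $s'$ ($0/0=0$). For $B\subseteq\mathsf{Bel}$, a belief in $B$ is interior if it is a convex combination of beliefs in $B\setminus\{\mathsf{bel}\}$; $V(B)\subseteq B$ is the set of non-interior elements (vertices of the convex hull of $B$). *)

From HB Require Import structures.
From mathcomp Require Import all_boot all_order all_algebra.
From mathcomp Require Import boolp classical_sets reals.
Set Implicit Arguments. Unset Strict Implicit. Unset Printing Implicit Defensive.
Import Order.TTheory GRing.Theory Num.Theory.
Local Open Scope ring_scope.
Local Open Scope classical_set_scope.

Section MDPDefs.
Variables (R : realType) (S Act Z : finType).

Definition is_distr (X : finType) (f : X -> R) : Prop :=
  (forall x, 0 <= f x) /\ \sum_(x : X) f x = 1.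

(* The partial transition function is
   encoded by a domain predicate [avail] together with a total function [trans];
   the values [trans s a] for [~~ avail s a] are irrelevant (never used). *)
Record MDP := {
  iota : S -> R;
  avail : S -> Act -> bool;
  trans : S -> Act -> S -> R;
  obs : S -> Z -> R;
  iota_distr : is_distr iota;
  trans_distr : forall s a, avail s a -> is_distr (trans s a);
  obs_distr : forall s, is_distr (obs s);
  avail_nonempty : forall s, exists a, avail s a
}.

Variable M : MDP.

(* A finite path s0 a0 s1 ... a_{n-1} s_n is represented by its first state s0
   and the sequence of steps [(a0,s1); ...; (a_{n-1},s_n)]. *)
Definition path_last (s0 : S) (steps : seq (Act * S)) : S :=
  last s0 (map snd steps).

Fixpoint steps_ok (cur : S) (steps : seq (Act * S)) : bool :=
  match steps with
  | [::] => true
  | (a, s') :: rest => avail M cur a && (0 < trans M cur a s') && steps_ok s' rest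
  end.

Definition is_path (s0 : S) (steps : seq (Act * S)) : bool :=
  (0 < iota M s0) && steps_ok s0 steps.

(* A scheduler maps each finite path (s0, steps) to a distribution on the
   available actions of its last state. (It is also given values on non-paths,
   which never influence any probability below.) *)
Definition scheduler := S -> seq (Act * S) -> Act -> R.

Definition is_scheduler (sigma : scheduler) : Prop :=
  forall s0 steps, is_distr (sigma s0 steps) /\
    forall a, ~~ avail M (path_last s0 steps) a -> sigma s0 steps a = 0.

Fixpoint path_prob_aux (sigma : scheduler) (s0 : S) (pre : seq (Act * S))
    (cur : S) (rest : seq (Act * S)) : R :=
  match rest with
  | [::] => 1
  | (a, s') :: rest' =>
      sigma s0 pre a * trans M cur a s' *
      path_prob_aux sigma s0 (rcons pre (a, s')) s' rest'
  end.

Definition path_prob (sigma : scheduler) (s0 : S) (steps : seq (Act * S)) : R :=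
  iota M s0 * path_prob_aux sigma s0 [::] s0 steps.

Definition trace_given_path (z0 : Z) (zs : seq Z) (s0 : S)
    (steps : seq (Act * S)) : R :=
  if size steps == size zs then
    obs M s0 z0 * \prod_(p <- zip (map snd steps) zs) obs M p.1 p.2
  else 0.

(* Pr^sigma(tau): sum over Paths(tau) (paths with as many states as tau has
   observations, i.e. size zs steps). *)
Definition trace_prob (sigma : scheduler) (z0 : Z) (zs : seq Z) : R :=
  \sum_(s0 : S) \sum_(t : (size zs).-tuple (Act * S) | is_path s0 t)
    path_prob sigma s0 t * trace_given_path z0 zs s0 t.

(* Pr^sigma(pi | tau), with 0/0 = 0 (MathComp's x / 0 = 0) *)
Definition path_given_trace (sigma : scheduler) (z0 : Z) (zs : seq Z)
    (s0 : S) (steps : seq (Act * S)) : R :=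
  trace_given_path z0 zs s0 steps * path_prob sigma s0 steps
  / trace_prob sigma z0 zs.

Definition sched_risk (r : S -> R) (sigma : scheduler) (z0 : Z) (zs : seq Z) : R :=
  \sum_(s0 : S) \sum_(t : (size zs).-tuple (Act * S) | is_path s0 t)
    path_given_trace sigma z0 zs s0 t * r (path_last s0 t).

Definition risk (r : S -> R) (z0 : Z) (zs : seq Z) : R :=
  sup [set x | exists sigma, is_scheduler sigma /\ x = sched_risk r sigma z0 zs].

Local Notation belief := {ffun S -> R}.

Definition init_belief (z : Z) : belief :=
  let den := \sum_(s : S) iota M s * obs M s z in
  if den == 0 then 0 else [ffun s => iota M s * obs M s z / den].

Definition est_up (bel : belief) (z : Z) : set belief :=
  [set bel' | exists varsigma : S -> Act -> R,
    (forall s, is_distr (varsigma s) /\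
               forall a, ~~ avail M s a -> varsigma s a = 0) /\
    bel' = [ffun s' =>
      (\sum_(s : S) bel s * \sum_(a : Act) varsigma s a * trans M s a s' * obs M s' z)
      / (\sum_(s : S) bel s * \sum_(a : Act) varsigma s a *
           \sum_(sh : S) trans M s a sh * obs M sh z)]].

Definition est (z0 : Z) (zs : seq Z) : set belief :=
  foldl (fun B z => \bigcup_(b in B) est_up b z) [set init_belief z0] zs.

Definition interior_in (B : set belief) (bel : belief) : Prop :=
  exists (n : nat) (w : 'I_n -> R) (c : 'I_n -> belief),
    (forall i, 0 <= w i) /\ \sum_(i < n) w i = 1 /\
    (forall i, B (c i) /\ c i <> bel) /\
    (forall s, bel s = \sum_(i < n) w i * c i s).

Definition vertices (B : set belief) : set belief :=
  [set bel | B bel /\ ~ interior_in B bel].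

Definition belief_risk (r : S -> R) (bel : belief) : R :=
  \sum_(s : S) bel s * r s.

End MDPDefs.

(* A scheduler sigma and the trace tau determine the unnormalised forward vector
   s |-> Pr^sigma(tau, last = s).  It obeys the one-step recursion of est_MDP, the
   local decision at s being the average of sigma over the paths ending in s;
   conversely a belief of est_MDP(tau) is reached by the scheduler that plays its
   successive local decisions.  Hence R_r(tau) is the supremum of the linear map
   b |-> sum_s b(s) r(s) over est_MDP(tau).
   The update is multilinear in the local decision, so every belief of est_MDP(tau)
   is 0 or a convex combination of the finitely many beliefs reached by
   deterministic decisions.  A lexicographic maximiser m of the key
   (risk, b(s_1), ..., b(s_n)) among these dominates all of est_MDP(tau), so it
   attains the supremum.  It is also a vertex: a convex combination of beliefs
   whose keys are at most that of m reaches the key of m only if every positively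
   weighted belief has that key, hence equals m since the key is injective. *)

From Pilot Require Import Defs.
From HB Require Import structures.
From mathcomp Require Import all_boot all_order all_algebra.
From mathcomp Require Import boolp classical_sets reals.
From mathcomp Require Import ring.
Set Implicit Arguments. Unset Strict Implicit. Unset Printing Implicit Defensive.
Import Order.TTheory GRing.Theory Num.Theory.
Local Open Scope ring_scope.

Lemma big_tuple_rcons (R : Type) (idx : R) (op : Monoid.com_law idx) (T : finType)
    n (F : n.+1.-tuple T -> R) :
  \big[op/idx]_(t : n.+1.-tuple T) F t =
  \big[op/idx]_(t : n.-tuple T) \big[op/idx]_(x : T) F [tuple of rcons t x].
Proof.
rewrite pair_big /= (reindex (fun p : n.-tuple T * T => [tuple of rcons p.1 p.2])) //=.
pose split_last (t : n.+1.-tuple T) :=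
  ([tuple of belast (thead t) (behead t)], last (thead t) (behead t)).
have split_lastK t : rcons (split_last t).1 (split_last t).2 = t.
  by rewrite /= -lastI [in RHS](tuple_eta t).
exists split_last => [[t x] _ | t _]; last first.
  by apply: val_inj; exact: split_lastK.
case: (rcons_inj (split_lastK [tuple of rcons t x])) => e1 e2.
by congr pair => //; apply: val_inj.
Qed.

Lemma sum_ffun_prod_eval (R : comPzSemiRingType) (A B : finType)
    (p : A -> B -> R) (G : B -> R) (a0 : A) :
  (forall a, \sum_b p a b = 1) ->
  \sum_(d : {ffun A -> B}) (\prod_a p a (d a)) * G (d a0) = \sum_b p a0 b * G b.
Proof.
move=> p_sum1.
pose q a b := if a == a0 then p a b * G b else p a b.
transitivity (\prod_a \sum_b q a b); last first.
  rewrite (bigD1 a0) //= [X in _ * X]big1 ?mulr1 => [|a /negbTE a_neq].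
    by apply: eq_bigr => b _; rewrite /q eqxx.
  by rewrite -(p_sum1 a); apply: eq_bigr => b _; rewrite /q a_neq.
rewrite bigA_distr_bigA /=; apply: eq_bigr => d _.
rewrite (bigD1 a0) //= [in RHS](bigD1 a0) //= /q eqxx mulrAC; congr (_ * _).
by apply: eq_bigr => a /negbTE ->.
Qed.

Lemma seq_argmax (T : eqType) d (O : orderType d) (key : T -> O) (s : seq T) :
  s != [::] -> exists2 m, m \in s & {in s, forall x, (key x <= key m)%O}.
Proof.
elim: s => [|x s IH] // _; have [-> | /IH [m sm m_max]] := eqVneq s [::].
  by exists x => [|y]; rewrite ?inE // => /eqP ->.
have [xm | mx] := leP (key x) (key m).
  by exists m => [|y]; rewrite inE ?sm ?orbT // => /predU1P [-> | /m_max].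
exists x => [|y]; rewrite inE ?eqxx // => /predU1P [-> // | /m_max].
by move/le_trans; apply; exact: ltW.
Qed.

Section Vectors.
Variables (R : realFieldType) (S : finType).
Local Notation vec := {ffun S -> R}.
Implicit Types (b m v x : vec) (L : seq vec).

Definition nonneg x := forall s, 0 <= x s.

Definition dot b v : R := \sum_s b s * v s.

Definition comb (I : finType) (w : I -> R) (c : I -> vec) : vec :=
  [ffun s => \sum_i w i * c i s].

Definition unit_vec s : vec := [ffun s' => (s' == s)%:R].

(* With x / 0 = 0, a vector of total mass 0 is normalised to the belief 0. *)
Definition normalize x : vec := [ffun s => x s / \sum_u x u].

(* Points of weight 0 are not required to satisfy P. *)
Definition in_conv (P : vec -> Prop) b : Prop :=
  exists (I : finType) (w : I -> R) (c : I -> vec),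
    [/\ forall i, 0 <= w i, \sum_i w i = 1, forall i, 0 < w i -> P (c i)
      & b = comb w c].

Lemma in_conv_sub (P Q : vec -> Prop) b :
  (forall f, P f -> Q f) -> in_conv P b -> in_conv Q b.
Proof.
by move=> PQ [I [w [c [w_ge0 w_sum1 Pc ->]]]]; exists I, w, c; split=> // i /Pc /PQ.
Qed.

Lemma dot_ge0 b v : nonneg b -> nonneg v -> 0 <= dot b v.
Proof. by move=> b_ge0 v_ge0; apply: sumr_ge0 => s _; exact: mulr_ge0. Qed.

Lemma dot_unit_vec b s : dot b (unit_vec s) = b s.
Proof.
rewrite /dot (bigD1 s) //= ffunE eqxx mulr1 big1 ?addr0 // => s' /negbTE s'_neq.
by rewrite ffunE s'_neq mulr0.
Qed.

Lemma dot_comb (I : finType) (w : I -> R) c v :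
  dot (comb w c) v = \sum_i w i * dot (c i) v.
Proof.
rewrite /dot; under eq_bigr do rewrite ffunE mulr_suml.
rewrite exchange_big; apply: eq_bigr => i _.
by rewrite mulr_sumr; apply: eq_bigr => s _; rewrite mulrA.
Qed.

Lemma comb_pair (I J : finType) (w : I -> R) (u : J -> R) (c : I -> J -> vec) :
  comb w (fun i => comb u (c i)) = comb (fun p => w p.1 * u p.2) (fun p => c p.1 p.2).
Proof.
apply/ffunP => s; rewrite !ffunE -(pair_bigA _ (fun i j => w i * u j * c i j s)).
by apply: eq_bigr => i _; rewrite ffunE mulr_sumr; apply: eq_bigr => j _; rewrite mulrA.
Qed.

Lemma nonneg_sum_eq0 x : nonneg x -> \sum_s x s = 0 -> x = 0.
Proof.
move=> x_ge0 /eqP; rewrite psumr_eq0 // => /allP x0.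
by apply/ffunP => s; rewrite ffunE; apply/eqP/x0; rewrite mem_index_enum.
Qed.

Lemma normalize_ge0 x : nonneg x -> nonneg (normalize x).
Proof. by move=> x_ge0 s; rewrite ffunE divr_ge0 ?sumr_ge0. Qed.

Lemma normalize0 : normalize 0 = 0.
Proof. by apply/ffunP => s; rewrite !ffunE mul0r. Qed.

Lemma normalizeZ (k : R) x : k != 0 -> normalize [ffun s => k * x s] = normalize x.
Proof.
move=> k_neq0; apply/ffunP => s; rewrite !ffunE.
under eq_bigr do rewrite ffunE; rewrite -mulr_sumr.
have [-> | sum_neq0] := eqVneq (\sum_u x u) 0; first by rewrite mulr0 !invr0 !mulr0.
by rewrite invfM mulrACA mulfV // mul1r.
Qed.

Lemma normalize_comb (I : finType) (w : I -> R) (y : I -> vec) :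
  (forall i, 0 <= w i) -> (forall i, 0 < w i -> nonneg (y i)) ->
  normalize (comb w y) = 0 \/
  in_conv (fun b => exists2 i, 0 < w i & b = normalize (y i)) (normalize (comb w y)).
Proof.
move=> w_ge0 y_ge0.
have w_cases i : 0 = w i \/ 0 < w i by apply/predU1P; rewrite -le_eqVlt.
have wy_ge0 i s : 0 <= w i * y i s.
  case: (w_cases i) => [<- | wi_gt0]; first by rewrite mul0r.
  by rewrite mulr_ge0 ?(ltW wi_gt0) ?y_ge0.
set Y := comb w y; have Y_ge0 : nonneg Y by move=> s; rewrite ffunE sumr_ge0.
have [Y0 | Y_neq0] := eqVneq (\sum_s Y s) 0.
  by left; rewrite (nonneg_sum_eq0 Y_ge0 Y0) normalize0.
have sumY : \sum_s Y s = \sum_i w i * \sum_s y i s.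
  under eq_bigr do rewrite ffunE.
  by rewrite exchange_big; apply: eq_bigr => i _; rewrite mulr_sumr.
right; exists I, (fun i => w i * (\sum_s y i s) / \sum_s Y s), (fun i => normalize (y i)).
split=> [i | | i | ].
- by rewrite divr_ge0 ?sumr_ge0 // mulr_sumr sumr_ge0.
- by rewrite -mulr_suml -sumY mulfV.
- by case: (w_cases i) => [<- | wi_gt0]; [rewrite !mul0r ltxx | exists i].
apply/ffunP => s; rewrite !ffunE mulr_suml; apply: eq_bigr => i _; rewrite ffunE.
have [yi0 | yi_neq0] := eqVneq (\sum_s y i s) 0; last by field; apply/andP.
case: (w_cases i) => [<- | wi_gt0]; first by rewrite !mul0r.
by rewrite (nonneg_sum_eq0 (y_ge0 i wi_gt0) yi0) !ffunE !(mulr0, mul0r).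
Qed.

Lemma convex_leif (I : finType) (w a : I -> R) (x : R) :
  (forall i, 0 <= w i) -> \sum_i w i = 1 -> (forall i, 0 < w i -> a i <= x) ->
  \sum_i w i * a i <= x ?= iff [forall i, (0 < w i) ==> (a i == x)].
Proof.
move=> w_ge0 w_sum1 a_le.
suff: \sum_i w i * a i <= \sum_i w i * x ?= iff [forall i, (0 < w i) ==> (a i == x)].
  by rewrite -mulr_suml w_sum1 mul1r.
apply: leif_sum => i _; have := w_ge0 i; rewrite le_eqVlt => /predU1P [<- | wi_gt0].
  by rewrite !mul0r ltxx; split; rewrite ?eqxx.
rewrite wi_gt0 /=; split; first by rewrite ler_pM2l ?a_le.
by rewrite (inj_eq (mulfI (lt0r_neq0 wi_gt0))).
Qed.

Definition lin_key L b : seqlexi R := [seq dot b v | v <- L].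

Lemma lin_key_inj L : (forall s, unit_vec s \in L) -> injective (lin_key L).
Proof.
move=> L_units b b' /eq_in_map eq_dot; apply/ffunP => s.
by have := eq_dot _ (L_units s); rewrite !dot_unit_vec.
Qed.

Lemma lin_key0_le L m :
  (forall v, v \in L -> 0 <= dot m v) -> (lin_key L 0 <= lin_key L m)%O.
Proof.
elim: L => //= v L IH m_ge0; rewrite lexi_cons.
have -> : dot 0 v = 0 by apply: big1 => s _; rewrite ffunE mul0r.
by rewrite m_ge0 ?mem_head //= IH ?implybT // => u Lu; rewrite m_ge0 // inE Lu orbT.
Qed.

Section ConvexCombination.
Variables (I : finType) (w : I -> R) (c : I -> vec) (m : vec).
Hypotheses (w_ge0 : forall i, 0 <= w i) (w_sum1 : \sum_i w i = 1).

Lemma lin_key_comb_cons v L :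
  (forall i, 0 < w i -> (lin_key (v :: L) (c i) <= lin_key (v :: L) m)%O) ->
  dot (comb w c) v <= dot m v /\
  (dot m v <= dot (comb w c) v -> forall i, 0 < w i ->
     dot (c i) v = dot m v /\ (lin_key L (c i) <= lin_key L m)%O).
Proof.
move=> c_le; have c_le_head i wi_gt0 := lexi_lehead (c_le i wi_gt0).
have [comb_le comb_eq] := convex_leif w_ge0 w_sum1 c_le_head.
rewrite -dot_comb in comb_le comb_eq; split=> // m_le i wi_gt0.
have /forallP/(_ i)/implyP/(_ wi_gt0)/eqP c_eq :
    [forall i, (0 < w i) ==> (dot (c i) v == dot m v)].
  by rewrite -comb_eq eq_le comb_le m_le.
split=> //; have := c_le i wi_gt0.
by rewrite [(_ <= _)%O]lexi_cons c_eq lexx.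
Qed.

Lemma lin_key_comb_le L :
  (forall i, 0 < w i -> (lin_key L (c i) <= lin_key L m)%O) ->
  (lin_key L (comb w c) <= lin_key L m)%O.
Proof.
elim: L => // v L IH c_le; have [comb_le comb_eq] := lin_key_comb_cons c_le.
rewrite [(_ <= _)%O]lexi_cons comb_le; apply/implyP => m_le.
by apply: IH => i /(comb_eq m_le) [].
Qed.

Lemma lin_key_comb_eq L :
  (forall i, 0 < w i -> (lin_key L (c i) <= lin_key L m)%O) ->
  (lin_key L m <= lin_key L (comb w c))%O ->
  forall i, 0 < w i -> lin_key L (c i) = lin_key L m.
Proof.
elim: L => // v L IH c_le; have [comb_le comb_eq] := lin_key_comb_cons c_le.
rewrite [(_ <= _)%O]lexi_cons => /andP [m_le /implyP/(_ comb_le) tail_le] i wi_gt0.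
have [c_eq _] := comb_eq m_le i wi_gt0.
by rewrite /lin_key /= c_eq; congr cons; apply: IH => // j /(comb_eq m_le) [].
Qed.

End ConvexCombination.
End Vectors.

Arguments unit_vec {R S} s.

Lemma lexi_max_vertex (R : realType) (S : finType) (B : set {ffun S -> R})
    (L : seq {ffun S -> R}) m :
  (forall s, unit_vec s \in L) -> B m ->
  (forall b, B b -> (lin_key L b <= lin_key L m)%O) -> vertices B m.
Proof.
move=> L_units Bm m_max; split=> // -[n [w [c [w_ge0 [w_sum1 [Bc m_def]]]]]].
have m_comb : m = comb w c by apply/ffunP => s; rewrite ffunE m_def.
have [i /= wi_gt0] : exists i, true && (0 < w i).
  by apply: psumr_neq0P => [i _ | ]; rewrite ?w_sum1 ?w_ge0 //; apply/eqP/oner_neq0.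
have c_le j : 0 < w j -> (lin_key L (c j) <= lin_key L m)%O.
  by move=> _; exact: m_max (proj1 (Bc j)).
apply: (proj2 (Bc i)); apply: (lin_key_inj L_units).
by apply: (lin_key_comb_eq w_ge0 w_sum1 c_le) => //; rewrite -m_comb.
Qed.

Lemma sup_eq_max (R : realType) (E : set R) x : E x -> ubound E x -> sup E = x.
Proof.
move=> Ex ubx; apply/le_anti/andP; split; first by apply: ge_sup => //; exists x.
by apply: ub_le_sup => //; exists x.
Qed.

Section BeliefUpdate.
Variables (R : realType) (S Act Z : finType) (M : MDP R S Act Z).
Local Notation belief := {ffun S -> R}.
Implicit Types (b x : belief) (vs : S -> Act -> R) (z : Z).

Definition is_decision (vs : S -> Act -> R) : Prop :=
  forall s, is_distr (vs s) /\ forall a, ~~ avail M s a -> vs s a = 0.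

Definition update (b : belief) (vs : S -> Act -> R) (z : Z) : belief :=
  [ffun s' => \sum_s b s * \sum_a vs s a * trans M s a s' * obs M s' z].

Lemma iota_ge0 s : 0 <= Defs.iota M s.
Proof. by case: (iota_distr M) => ->. Qed.

Lemma obs_ge0 s z : 0 <= obs M s z.
Proof. by case: (obs_distr M s) => ->. Qed.

Lemma trans_ge0 s a s' : avail M s a -> 0 <= trans M s a s'.
Proof. by case/trans_distr => ->. Qed.

Lemma decision_trans_ge0 vs s a s' : is_decision vs -> 0 <= vs s a * trans M s a s'.
Proof.
case/(_ s) => [[vs_ge0 _] vs_avail]; have [sa | /vs_avail ->] := boolP (avail M s a).
  by rewrite mulr_ge0 ?trans_ge0.
by rewrite mul0r.
Qed.

Lemma update_ge0 b vs z : nonneg b -> is_decision vs -> nonneg (update b vs z).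
Proof.
move=> b_ge0 vs_dec s'; rewrite ffunE; apply: sumr_ge0 => s _.
rewrite mulr_ge0 // sumr_ge0 // => a _.
by rewrite mulr_ge0 ?obs_ge0 ?decision_trans_ge0.
Qed.

Lemma updateZ (k : R) b vs z :
  update [ffun s => k * b s] vs z = [ffun s' => k * update b vs z s'].
Proof.
apply/ffunP => s'; rewrite !ffunE mulr_sumr.
by apply: eq_bigr => s _; rewrite ffunE mulrA.
Qed.

Lemma update_comb (I : finType) (w : I -> R) (c : I -> belief) vs z :
  update (comb w c) vs z = comb w (fun i => update (c i) vs z).
Proof.
apply/ffunP => s'; rewrite !ffunE.
under eq_bigr do rewrite ffunE mulr_suml.
rewrite exchange_big; apply: eq_bigr => i _.
by rewrite ffunE mulr_sumr; apply: eq_bigr => s _; rewrite mulrA.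
Qed.

Lemma normalize_update x vs z : nonneg x ->
  normalize (update (normalize x) vs z) = normalize (update x vs z).
Proof.
move=> x_ge0; have [x0 | sum_neq0] := eqVneq (\sum_s x s) 0.
  by rewrite (nonneg_sum_eq0 x_ge0 x0) normalize0.
have -> : normalize x = [ffun s => (\sum_u x u)^-1 * x s].
  by apply/ffunP => s; rewrite !ffunE mulrC.
by rewrite updateZ normalizeZ ?invr_eq0.
Qed.

Lemma est_upE b z bel :
  est_up M b z bel <-> exists2 vs, is_decision vs & bel = normalize (update b vs z).
Proof.
have den vs : \sum_s b s * \sum_a vs s a * \sum_sh trans M s a sh * obs M sh z
    = \sum_s' update b vs z s'.
  under [RHS]eq_bigr do rewrite ffunE.
  rewrite exchange_big; apply: eq_bigr => s _; rewrite -mulr_sumr exchange_big.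
  congr (_ * _); apply: eq_bigr => a _; rewrite mulr_sumr.
  by apply: eq_bigr => sh _; rewrite mulrA.
split=> [[vs [vs_dec ->]] | [vs vs_dec ->]]; exists vs => //; last split=> //.
  by apply/ffunP => s'; rewrite !ffunE den.
by apply/ffunP => s'; rewrite !ffunE den.
Qed.

Definition det_decision (d : S -> Act) : S -> Act -> R := fun s a => (a == d s)%:R.

Lemma sum_det_decision (d : S -> Act) s (g : Act -> R) :
  \sum_a det_decision d s a * g a = g (d s).
Proof.
under eq_bigr do rewrite mulr_natl mulrb; rewrite -big_mkcond.
by apply: big_pred1 => a; rewrite /= eq_sym.
Qed.

Lemma det_decisionP (d : S -> Act) :
  (forall s, avail M s (d s)) -> is_decision (det_decision d).
Proof.
move=> d_avail s; split; first split.
- by move=> a; rewrite ler0n.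
- by rewrite -[RHS](sum_det_decision d s (fun=> 1)); apply: eq_bigr => a _; rewrite mulr1.
by move=> a; rewrite /det_decision; case: eqP => // -> /negP.
Qed.

Definition some_act (s : S) : Act := xchoose (avail_nonempty M s).

Lemma some_actP s : avail M s (some_act s).
Proof. exact: xchooseP. Qed.

Variable z0 : Z.

Definition init_weight : belief := [ffun s => Defs.iota M s * obs M s z0].

Lemma init_weight_ge0 : nonneg init_weight.
Proof. by move=> s; rewrite ffunE mulr_ge0 ?iota_ge0 ?obs_ge0. Qed.

Lemma est_nil b : est M z0 [::] b <-> b = normalize init_weight.
Proof.
rewrite /est /=; have -> // : init_belief M z0 = normalize init_weight.
  rewrite /init_belief (_ : \sum_s _ = \sum_s init_weight s); last first.
    by apply: eq_bigr => s _; rewrite ffunE.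
by case: eqP => [sum0 | _]; apply/ffunP => s; rewrite !ffunE ?sum0 ?invr0 ?mulr0.
Qed.

Lemma est_rcons zs z b :
  est M z0 (rcons zs z) b <-> exists2 b', est M z0 zs b' & est_up M b' z b.
Proof. by rewrite /est foldl_rcons; split=> [[b' ? ?] | [b' ? ?]]; exists b'. Qed.

Lemma est_ge0 zs b : est M z0 zs b -> nonneg b.
Proof.
elim/last_ind: zs b => [|zs z IH] b.
  by move/est_nil => ->; apply/normalize_ge0/init_weight_ge0.
case/est_rcons => b' /IH b'_ge0 /est_upE [vs vs_dec ->].
exact/normalize_ge0/update_ge0.
Qed.

End BeliefUpdate.

Arguments det_decision {R S Act} d s a.

Section Schedulers.
Variables (R : realType) (S Act Z : finType) (M : MDP R S Act Z) (z0 : Z).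
Local Notation belief := {ffun S -> R}.
Local Notation steps := (seq (Act * S)).
Implicit Types (sg : scheduler R S Act) (vs : S -> Act -> R) (zs : seq Z) (z : Z)
  (t : steps).

Lemma path_last_rcons s0 t p : path_last s0 (rcons t p) = p.2.
Proof. by rewrite /path_last map_rcons last_rcons. Qed.

Lemma is_path_rcons s0 t a x :
  is_path M s0 (rcons t (a, x)) =
  [&& is_path M s0 t, avail M (path_last s0 t) a & 0 < trans M (path_last s0 t) a x].
Proof.
rewrite /is_path -!andbA; congr (_ && _).
by elim: t s0 => [|[a' x'] t IH] s0 /=; rewrite ?andbT // IH !andbA.
Qed.

Lemma path_prob_rcons sg s0 t a x :
  path_prob M sg s0 (rcons t (a, x)) =
  path_prob M sg s0 t * sg s0 t a * trans M (path_last s0 t) a x.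
Proof.
rewrite /path_prob -!mulrA; congr (_ * _); rewrite mulrA.
have aux pre cur : path_prob_aux M sg s0 pre cur (rcons t (a, x)) =
    path_prob_aux M sg s0 pre cur t * sg s0 (pre ++ t) a * trans M (last cur (map snd t)) a x.
  elim: t pre cur => [|[a' x'] t IH] pre cur /=; first by rewrite cats0 mul1r mulr1.
  by rewrite IH cat_rcons !mulrA.
exact: aux.
Qed.

Lemma trace_given_path_rcons zs z s0 t p : size t = size zs ->
  trace_given_path M z0 (rcons zs z) s0 (rcons t p) =
  trace_given_path M z0 zs s0 t * obs M p.2 z.
Proof.
move=> size_t; rewrite /trace_given_path !size_rcons eqSS size_t eqxx.
by rewrite map_rcons zip_rcons ?size_map // -cats1 big_cat big_seq1 mulrA.
Qed.

Definition path_weight sg zs s0 t : R :=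
  path_prob M sg s0 t * trace_given_path M z0 zs s0 t.

Lemma path_weight_rcons sg zs z s0 t a x : size t = size zs ->
  path_weight sg (rcons zs z) s0 (rcons t (a, x)) =
  path_weight sg zs s0 t * sg s0 t a * trans M (path_last s0 t) a x * obs M x z.
Proof.
by move=> size_t; rewrite /path_weight path_prob_rcons trace_given_path_rcons //; ring.
Qed.

Lemma sched_ge0 sg s0 t a : is_scheduler M sg -> 0 <= sg s0 t a.
Proof. by case/(_ s0 t) => [[->]]. Qed.

Lemma sched_unavail sg s0 t a :
  is_scheduler M sg -> ~~ avail M (path_last s0 t) a -> sg s0 t a = 0.
Proof. by case/(_ s0 t) => _; apply. Qed.

Lemma path_prob_aux_ge0 sg s0 pre cur t :
  is_scheduler M sg -> steps_ok M cur t -> 0 <= path_prob_aux M sg s0 pre cur t.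
Proof.
move=> sg_ok; elim: t pre cur => [|[a x] t IH] pre cur //= /andP [/andP [_ trans_gt0] ok_t].
by rewrite !mulr_ge0 ?sched_ge0 ?IH // ltW.
Qed.

Lemma path_weight_ge0 sg zs s0 t :
  is_scheduler M sg -> is_path M s0 t -> 0 <= path_weight sg zs s0 t.
Proof.
move=> sg_ok /andP [iota_gt0 ok_t]; apply: mulr_ge0.
  by rewrite /path_prob mulr_ge0 ?path_prob_aux_ge0 // ltW.
rewrite /trace_given_path; case: ifP => // _.
by rewrite mulr_ge0 ?obs_ge0 // prodr_ge0 // => p _; exact: obs_ge0.
Qed.

Definition forward sg zs : belief := [ffun s =>
  \sum_s0 \sum_(t : (size zs).-tuple (Act * S) | is_path M s0 t && (path_last s0 t == s))
    path_weight sg zs s0 t].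

Definition forward_act sg zs s a : R :=
  \sum_s0 \sum_(t : (size zs).-tuple (Act * S) | is_path M s0 t && (path_last s0 t == s))
    path_weight sg zs s0 t * sg s0 t a.

Lemma sum_by_last n (g : S -> steps -> S -> R) :
  \sum_s \sum_s0 \sum_(t : n.-tuple (Act * S) | is_path M s0 t && (path_last s0 t == s))
    g s0 t s =
  \sum_s0 \sum_(t : n.-tuple (Act * S) | is_path M s0 t) g s0 t (path_last s0 t).
Proof.
rewrite exchange_big; apply: eq_bigr => s0 _.
rewrite (exchange_big_dep (fun t : n.-tuple (Act * S) => is_path M s0 t)) //=; last first.
  by move=> s t _ /andP [].
apply: eq_bigr => t path_t; apply: big_pred1 => s.
by rewrite /= path_t eq_sym.
Qed.

Lemma forward_sum sg zs (f : S -> R) :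
  \sum_s forward sg zs s * f s =
  \sum_s0 \sum_(t : (size zs).-tuple (Act * S) | is_path M s0 t)
    path_weight sg zs s0 t * f (path_last s0 t).
Proof.
rewrite -(@sum_by_last _ (fun s0 t s => path_weight sg zs s0 t * f s)).
apply: eq_bigr => s _; rewrite ffunE mulr_suml.
by apply: eq_bigr => s0 _; rewrite mulr_suml.
Qed.

Lemma sum_path_weight_rcons sg zs z s0 t s' :
  is_scheduler M sg -> size t = size zs ->
  \sum_(p | is_path M s0 (rcons t p) && (path_last s0 (rcons t p) == s'))
    path_weight sg (rcons zs z) s0 (rcons t p) =
  if is_path M s0 t then
    \sum_a path_weight sg zs s0 t * sg s0 t a * trans M (path_last s0 t) a s' * obs M s' z
  else 0.
Proof.
move=> sg_ok size_t; set l := path_last s0 t.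
transitivity (\sum_a \sum_x if is_path M s0 (rcons t (a, x)) && (x == s')
    then path_weight sg (rcons zs z) s0 (rcons t (a, x)) else 0).
  by rewrite big_mkcond pair_big; apply: eq_bigr => -[a x] _; rewrite path_last_rcons.
case: ifP => path_t; last first.
  by rewrite big1 // => a _; rewrite big1 // => x _; rewrite is_path_rcons path_t.
apply: eq_bigr => a _.
rewrite (bigD1 s') //= eqxx andbT big1 ?addr0 => [|x /negbTE ->]; last by rewrite andbF.
rewrite is_path_rcons path_t path_weight_rcons //=.
have [avail_a | /(sched_unavail sg_ok) ->] /= := boolP (avail M l a); last first.
  by rewrite mulr0 !mul0r.
(* The guard 0 < P(l, a, s') is redundant: the weight carries the factor P(l, a, s'). *)
have [// | trans_le0] := ltrP 0 (trans M l a s').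
have -> : trans M l a s' = 0 by apply/le_anti; rewrite trans_le0 trans_ge0.
by rewrite mulr0 mul0r.
Qed.

Lemma forward_rcons sg zs z s' : is_scheduler M sg ->
  forward sg (rcons zs z) s' =
  \sum_s \sum_a forward_act sg zs s a * trans M s a s' * obs M s' z.
Proof.
move=> sg_ok.
transitivity (\sum_s \sum_s0 \sum_(t : (size zs).-tuple (Act * S) |
    is_path M s0 t && (path_last s0 t == s))
    \sum_a path_weight sg zs s0 t * sg s0 t a * trans M s a s' * obs M s' z); last first.
  apply: eq_bigr => s _; under eq_bigr do rewrite exchange_big.
  rewrite exchange_big; apply: eq_bigr => a _.
  rewrite /forward_act !mulr_suml; apply: eq_bigr => s0 _.
  by rewrite !mulr_suml.
rewrite (@sum_by_last _ (fun s0 t s =>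
  \sum_a path_weight sg zs s0 t * sg s0 t a * trans M s a s' * obs M s' z)).
rewrite ffunE size_rcons; apply: eq_bigr => s0 _.
rewrite big_mkcond big_tuple_rcons [RHS]big_mkcond; apply: eq_bigr => t _.
by rewrite -big_mkcond sum_path_weight_rcons ?size_tuple.
Qed.

Lemma forward_ge0 sg zs : is_scheduler M sg -> nonneg (forward sg zs).
Proof.
move=> sg_ok s; rewrite ffunE; apply: sumr_ge0 => s0 _.
by apply: sumr_ge0 => t /andP [path_t _]; exact: path_weight_ge0.
Qed.

Lemma forward_act_ge0 sg zs s a : is_scheduler M sg -> 0 <= forward_act sg zs s a.
Proof.
move=> sg_ok; apply: sumr_ge0 => s0 _; apply: sumr_ge0 => t /andP [path_t _].
by rewrite mulr_ge0 ?path_weight_ge0 ?sched_ge0.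
Qed.

Lemma forward_act_sum sg zs s : is_scheduler M sg ->
  \sum_a forward_act sg zs s a = forward sg zs s.
Proof.
move=> sg_ok; rewrite ffunE exchange_big; apply: eq_bigr => s0 _.
rewrite exchange_big; apply: eq_bigr => t _.
by rewrite -mulr_sumr; case: (sg_ok s0 t) => [[_ ->] _]; rewrite mulr1.
Qed.

Lemma forward_act_unavail sg zs s a : is_scheduler M sg -> ~~ avail M s a ->
  forward_act sg zs s a = 0.
Proof.
move=> sg_ok unavail; apply: big1 => s0 _; apply: big1 => t /andP [_ /eqP last_t].
by rewrite sched_unavail ?mulr0 ?last_t.
Qed.

Lemma forward_rcons_update sg zs z vs : is_scheduler M sg ->
  (forall s a, forward_act sg zs s a = forward sg zs s * vs s a) ->
  forward sg (rcons zs z) = update M (forward sg zs) vs z.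
Proof.
move=> sg_ok act_eq; apply/ffunP => s'; rewrite forward_rcons // ffunE.
apply: eq_bigr => s _; rewrite mulr_sumr; apply: eq_bigr => a _.
by rewrite act_eq !mulrA.
Qed.

(* At states of forward mass 0 the decision is irrelevant; any valid one will do. *)
Definition avg_decision sg zs : S -> Act -> R := fun s a =>
  if forward sg zs s == 0 then det_decision (some_act M) s a
  else forward_act sg zs s a / forward sg zs s.

Lemma avg_decisionP sg zs : is_scheduler M sg -> is_decision M (avg_decision sg zs).
Proof.
move=> sg_ok s; rewrite /avg_decision; case: eqP => [_ | fwd_neq0].
  exact: det_decisionP (some_actP M) s.
split; first split.
- by move=> a; rewrite divr_ge0 ?forward_act_ge0 ?forward_ge0.
- by rewrite -mulr_suml forward_act_sum // mulfV //; apply/eqP.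
by move=> a /(forward_act_unavail zs sg_ok) ->; rewrite mul0r.
Qed.

Lemma forward_act_avg sg zs s a : is_scheduler M sg ->
  forward_act sg zs s a = forward sg zs s * avg_decision sg zs s a.
Proof.
move=> sg_ok; rewrite /avg_decision; case: eqP => [fwd0 | fwd_neq0]; last first.
  by rewrite mulrCA mulfV ?mulr1 //; apply/eqP.
rewrite fwd0 mul0r; apply: (psumr_eq0P (P := predT)) => // [b _ | ].
  exact: forward_act_ge0.
by rewrite forward_act_sum.
Qed.

Lemma forward_nil sg : forward sg [::] = init_weight M z0.
Proof.
apply/ffunP => s; rewrite !ffunE.
transitivity (\sum_s0 if (0 < Defs.iota M s0) && (s0 == s)
    then Defs.iota M s0 * obs M s0 z0 else 0).
  apply: eq_bigr => s0 _; rewrite big_mkcond (big_pred1 [tuple]) => [|t]; last first.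
    by apply/esym/eqP; exact: tuple0.
  rewrite /is_path /path_last /path_weight /path_prob /trace_given_path /=.
  by rewrite big_nil !mulr1 andbT.
rewrite (bigD1 s) //= eqxx andbT big1 ?addr0 => [|s0 /negbTE ->]; last by rewrite andbF.
have [// | iota_le0] := ltrP 0 (Defs.iota M s).
have -> : Defs.iota M s = 0 by apply/le_anti; rewrite iota_le0 iota_ge0.
by rewrite mul0r.
Qed.

Lemma forward_est sg zs : is_scheduler M sg -> est M z0 zs (normalize (forward sg zs)).
Proof.
move=> sg_ok; elim/last_ind: zs => [|zs z IH]; first by apply/est_nil; rewrite forward_nil.
apply/est_rcons; exists (normalize (forward sg zs)) => //; apply/est_upE.
exists (avg_decision sg zs); first exact: avg_decisionP.
have act_avg s a : forward_act sg zs s a = forward sg zs s * avg_decision sg zs s a.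
  exact: forward_act_avg.
rewrite normalize_update; last exact: forward_ge0.
by rewrite (forward_rcons_update z sg_ok act_avg).
Qed.

Definition memoryless vs : scheduler R S Act := fun s0 t => vs (path_last s0 t).

Definition sched_extend sg n vs : scheduler R S Act :=
  fun s0 t => if (size t < n)%N then sg s0 t else memoryless vs s0 t.

Lemma memorylessP vs : is_decision M vs -> is_scheduler M (memoryless vs).
Proof. by move=> vs_dec s0 t; exact: vs_dec. Qed.

Lemma sched_extendP sg n vs :
  is_scheduler M sg -> is_decision M vs -> is_scheduler M (sched_extend sg n vs).
Proof.
move=> sg_ok vs_dec s0 t; rewrite /sched_extend.
by case: ifP => _; [exact: sg_ok | exact: memorylessP].
Qed.

Lemma path_prob_prefix sg sg' s0 t :
  (forall t', (size t' < size t)%N -> sg s0 t' = sg' s0 t') ->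
  path_prob M sg s0 t = path_prob M sg' s0 t.
Proof.
have aux pre cur :
    (forall t', (size t' < size pre + size t)%N -> sg s0 t' = sg' s0 t') ->
    path_prob_aux M sg s0 pre cur t = path_prob_aux M sg' s0 pre cur t.
  elim: t pre cur => [|[a x] t IH] pre cur //= sg_eq.
  rewrite sg_eq ?addnS ?ltnS ?leq_addr // (IH (rcons pre (a, x)) x) // => t' t'_lt.
  by apply: sg_eq; rewrite addnS -addSn -(size_rcons pre (a, x)).
by move=> sg_eq; rewrite /path_prob (aux [::]).
Qed.

Lemma path_weight_extend sg zs vs s0 t : size t = size zs ->
  path_weight (sched_extend sg (size zs) vs) zs s0 t = path_weight sg zs s0 t.
Proof.
move=> size_t; rewrite /path_weight (@path_prob_prefix _ sg) // => t' t'_lt.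
by rewrite /sched_extend -size_t t'_lt.
Qed.

Lemma forward_extend sg zs vs : forward (sched_extend sg (size zs) vs) zs = forward sg zs.
Proof.
apply/ffunP => s; rewrite !ffunE; apply: eq_bigr => s0 _; apply: eq_bigr => t _.
by rewrite path_weight_extend ?size_tuple.
Qed.

Lemma forward_act_extend sg zs vs s a :
  forward_act (sched_extend sg (size zs) vs) zs s a = forward sg zs s * vs s a.
Proof.
rewrite ffunE mulr_suml; apply: eq_bigr => s0 _; rewrite mulr_suml.
apply: eq_bigr => t /andP [_ /eqP last_t].
by rewrite path_weight_extend ?size_tuple // /sched_extend size_tuple ltnn /memoryless last_t.
Qed.

Lemma est_forward zs b :
  est M z0 zs b -> exists2 sg, is_scheduler M sg & b = normalize (forward sg zs).
Proof.
elim/last_ind: zs b => [|zs z IH] b.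
  move/est_nil => ->; exists (memoryless (det_decision (some_act M))).
    exact/memorylessP/det_decisionP/some_actP.
  by rewrite forward_nil.
case/est_rcons => b' /IH [sg sg_ok ->] /est_upE [vs vs_dec ->].
have ext_ok := sched_extendP (size zs) sg_ok vs_dec.
have act_ext s a : forward_act (sched_extend sg (size zs) vs) zs s a =
    forward (sched_extend sg (size zs) vs) zs s * vs s a.
  by rewrite forward_act_extend forward_extend.
exists (sched_extend sg (size zs) vs) => //.
rewrite normalize_update; last exact: forward_ge0.
by rewrite (forward_rcons_update z ext_ok act_ext) forward_extend.
Qed.

Lemma trace_prob_forward sg zs : trace_prob M sg z0 zs = \sum_s forward sg zs s.
Proof.
under [RHS]eq_bigr do rewrite -[forward _ _ _]mulr1.
by rewrite forward_sum; apply: eq_bigr => s0 _; apply: eq_bigr => t _; rewrite mulr1.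
Qed.

Lemma sched_risk_forward (r : S -> R) sg zs :
  sched_risk M r sg z0 zs = belief_risk r (normalize (forward sg zs)).
Proof.
rewrite /belief_risk.
under eq_bigr do rewrite ffunE -trace_prob_forward mulrAC -mulrA.
rewrite forward_sum; apply: eq_bigr => s0 _; apply: eq_bigr => t _.
by rewrite /path_given_trace /path_weight; ring.
Qed.

Lemma risk_est (r : S -> R) zs :
  risk M r z0 zs = sup (belief_risk r @` est M z0 zs)%classic.
Proof.
congr sup; apply/seteqP; split=> x.
  case=> sg [sg_ok ->]; exists (normalize (forward sg zs)); first exact: forward_est.
  by rewrite sched_risk_forward.
by case=> b /est_forward [sg sg_ok ->] <-; exists sg; rewrite sched_risk_forward.
Qed.

End Schedulers.

Section DeterministicBeliefs.
Variables (R : realType) (S Act Z : finType) (M : MDP R S Act Z) (z0 : Z).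
Local Notation belief := {ffun S -> R}.
Implicit Types (b x : belief) (vs : S -> Act -> R) (zs : seq Z) (z : Z).

Definition mixture_weight vs (d : {ffun S -> Act}) : R := \prod_s vs s (d s).

Lemma mixture_weight_ge0 vs d : is_decision M vs -> 0 <= mixture_weight vs d.
Proof. by move=> vs_dec; apply: prodr_ge0 => s _; case: (vs_dec s) => [[->]]. Qed.

Definition avail_det : {set {ffun S -> Act}} :=
  [set d : {ffun S -> Act} | [forall s, avail M s (d s)]].

Lemma mixture_weight_avail vs d : is_decision M vs ->
  mixture_weight vs d != 0 -> d \in avail_det.
Proof.
move=> vs_dec /prodf_neq0 vs_neq0; rewrite inE; apply/forallP => s.
by apply: contraR (vs_neq0 s isT) => /(proj2 (vs_dec s)) ->.
Qed.

Lemma update_mixture x vs z : is_decision M vs ->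
  update M x vs z = comb (mixture_weight vs) (fun d => update M x (det_decision d) z).
Proof.
move=> vs_dec; apply/ffunP => s'; rewrite !ffunE.
have update_det d : update M x (det_decision d) z s' =
    \sum_s x s * (trans M s (d s) s' * obs M s' z).
  rewrite ffunE; apply: eq_bigr => s _.
  rewrite -(sum_det_decision d s (fun a => trans M s a s' * obs M s' z)).
  by congr (_ * _); apply: eq_bigr => a _; rewrite mulrA.
under [RHS]eq_bigr do rewrite update_det mulr_sumr.
rewrite exchange_big; apply: eq_bigr => s _.
under [RHS]eq_bigr do rewrite mulrCA.
rewrite -mulr_sumr (sum_ffun_prod_eval (fun a => trans M s a s' * obs M s' z)).
  by congr (_ * _); apply: eq_bigr => a _; rewrite mulrA.
by move=> u; case: (vs_dec u) => [[_ ->]].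
Qed.

Lemma update_comb_mixture (I : finType) (w : I -> R) (c : I -> belief) vs z :
  is_decision M vs ->
  update M (comb w c) vs z =
  comb (fun q => w q.1 * mixture_weight vs q.2)
       (fun q => update M (c q.1) (det_decision q.2) z).
Proof.
move=> vs_dec; rewrite update_comb.
rewrite -(comb_pair w (mixture_weight vs) (fun i d => update M (c i) (det_decision d) z)).
by congr comb; apply: funext => i; exact: update_mixture.
Qed.

Definition det_step (F : seq belief) z : seq belief :=
  [seq normalize (update M f (det_decision d) z)
    | f <- F, d : {ffun S -> Act} <- enum avail_det].

Definition det_beliefs zs : seq belief :=
  foldl det_step [:: normalize (init_weight M z0)] zs.

Lemma det_beliefs_rcons zs z : det_beliefs (rcons zs z) = det_step (det_beliefs zs) z.
Proof. by rewrite /det_beliefs foldl_rcons. Qed.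

Lemma det_beliefs_est zs f : f \in det_beliefs zs -> est M z0 zs f.
Proof.
elim/last_ind: zs f => [|zs z IH] f; first by rewrite inE => /eqP ->; apply/est_nil.
rewrite det_beliefs_rcons => /allpairsP [[g d] [/= /IH est_g]].
rewrite mem_enum inE => /forallP d_avail ->.
apply/est_rcons; exists g => //; apply/est_upE.
by exists (det_decision d) => //; exact: det_decisionP.
Qed.

Lemma det_beliefs_neq0 zs : det_beliefs zs != [::].
Proof.
elim/last_ind: zs => [|zs z]; rewrite ?det_beliefs_rcons // /det_step.
case: (det_beliefs zs) => // f F _.
have some_act_avail : [ffun s => some_act M s] \in enum avail_det.
  by rewrite mem_enum inE; apply/forallP => s; rewrite ffunE some_actP.
by case: (enum avail_det) some_act_avail.
Qed.

Lemma est_det_hull zs b :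
  est M z0 zs b -> b = 0 \/ in_conv (fun f => f \in det_beliefs zs) b.
Proof.
elim/last_ind: zs b => [|zs z IH] b.
  move/est_nil => ->; right; exists 'I_1, (fun=> 1), (fun=> normalize (init_weight M z0)).
  split=> [_ | | _ _ | ]; rewrite ?ler01 ?big_ord1 ?mem_head //.
  by apply/ffunP => s; rewrite [RHS]ffunE big_ord1 mul1r.
case/est_rcons => b' /IH [-> | [I [w [c [w_ge0 w_sum1 c_det ->]]]]] /est_upE [vs vs_dec ->].
  left; have -> : update M 0 vs z = 0.
    by apply/ffunP => s'; rewrite !ffunE big1 // => s _; rewrite ffunE mul0r.
  exact: normalize0.
rewrite update_comb_mixture //.
set p := fun q => _ * _.
have p_ge0 q : 0 <= p q by rewrite mulr_ge0 ?mixture_weight_ge0.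
have p_gt0 q : 0 < p q -> 0 < w q.1 /\ q.2 \in avail_det.
  move/lt0r_neq0; rewrite mulf_eq0 negb_or => /andP [w_neq0 mix_neq0].
  by rewrite lt0r w_neq0 w_ge0; split=> //; exact: mixture_weight_avail mix_neq0.
have y_ge0 q : 0 < p q -> nonneg (update M (c q.1) (det_decision q.2) z).
  case/p_gt0 => /c_det/det_beliefs_est/est_ge0 c_ge0; rewrite inE => /forallP d_avail.
  exact/update_ge0/det_decisionP.
have [-> | hull] := normalize_comb p_ge0 y_ge0; [by left | right; move: hull].
apply: in_conv_sub => _ [q /p_gt0 [/c_det c_in d_avail] ->].
by rewrite det_beliefs_rcons; apply/allpairsP; exists (c q.1, q.2); rewrite mem_enum.
Qed.

Lemma est_lexi_max zs (L : seq belief) : (forall v, v \in L -> nonneg v) ->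
  exists2 m, est M z0 zs m & forall b, est M z0 zs b -> (lin_key L b <= lin_key L m)%O.
Proof.
move=> L_ge0; have [m m_det m_max] := seq_argmax (lin_key L) (det_beliefs_neq0 zs).
have est_m := det_beliefs_est m_det.
exists m => // b /est_det_hull [-> | [I [w [c [w_ge0 w_sum1 c_det ->]]]]].
  by apply: lin_key0_le => v /L_ge0; exact: dot_ge0 (est_ge0 est_m).
by apply: lin_key_comb_le => // i /c_det /m_max.
Qed.

End DeterministicBeliefs.

Theorem theorem2 (R : realType) (S Act Z : finType) (M : MDP R S Act Z)
    (z0 : Z) (zs : seq Z) (r : S -> R) (r_ge0 : forall s, 0 <= r s) :
  (exists bel, vertices (est M z0 zs) bel /\ risk M r z0 zs = belief_risk r bel) /\
  (forall bel, vertices (est M z0 zs) bel -> belief_risk r bel <= risk M r z0 zs).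
Proof.
pose L := [ffun s => r s] :: map unit_vec (enum S).
have L_ge0 v : v \in L -> nonneg v.
  by rewrite inE => /predU1P [-> s | /mapP [s _ ->] s']; rewrite ffunE ?r_ge0 ?ler0n.
have L_units s : unit_vec s \in L by rewrite inE map_f ?mem_enum ?orbT.
have [m est_m m_max] := est_lexi_max M z0 zs L_ge0.
have risk_le b : est M z0 zs b -> belief_risk r b <= belief_risk r m.
  have dot_r b' : dot b' [ffun s => r s] = belief_risk r b'.
    by apply: eq_bigr => s _; rewrite ffunE.
  by move/m_max/lexi_lehead; rewrite !dot_r.
have risk_m : risk M r z0 zs = belief_risk r m.
  by rewrite risk_est; apply: sup_eq_max => [|_ [b /risk_le le_bm <-]]; first exists m.
split; first by exists m; split=> //; exact: lexi_max_vertex L_units est_m m_max.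
by move=> bel [est_bel _]; rewrite risk_m risk_le.
Qed.
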